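(* Let $\Xi:M_p\to M_q$ be an entanglement-breaking channel $\Xi(X)=\sum_{i=1}^l\mathrm{Tr}[XM_i]\sigma_i$, where $(M_i)_{i=1}^l$ is a POVM on $\mathbb C^p$ with $\|M_i\|_\infty=1$ for all $i$ and $\sigma_i\in D_q$, and let $\Psi:M_N\to M_k$ be any quantum channel. Then $$K_{\Xi\otimes\Psi}=K_\Xi\otimes K_\Psi,$$ where $K_{\Xi\otimes\Psi}=(\Xi\otimes\Psi)(D_{pN})$, $K_\Xi=\Xi(D_p)$, $K_\Psi=\Psi(D_N)$, and $K_\Xi\otimes K_\Psi$ denotes the smallest convex set containing all $X\otimes Y$ with $X\in K_\Xi$, $Y\in K_\Psi$.
   Context: A POVM is a family of positive semidefinite matrices summing to the identity; $D_d$ is the set of $d\times d$ density matrices; $\|\cdot\|_\infty$ is the operator norm. *)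

From mathcomp Require Import all_boot all_algebra.
From mathcomp Require Export complex mxtens.
From mathcomp Require Export reals.
Set Implicit Arguments. Unset Strict Implicit. Unset Printing Implicit Defensive.
Import GRing.Theory Num.Theory.
Local Open Scope ring_scope.

Section QDefs.
Variable C : numClosedFieldType.

Definition adjmx m n (A : 'M[C]_(m, n)) : 'M[C]_(n, m) := (map_mx Num.conj A)^T.

Definition vnorm n (v : 'cV[C]_n) : C := sqrtC (\sum_(j < n) `|v j 0| ^+ 2).

Definition is_opnorm n (A : 'M[C]_n) (c : C) : Prop :=
  (forall v : 'cV[C]_n, vnorm v = 1 -> vnorm (A *m v) <= c) /\
  (forall d : C, (forall v : 'cV[C]_n, vnorm v = 1 -> vnorm (A *m v) <= d) -> c <= d).

Definition psd n (A : 'M[C]_n) : Prop :=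
  adjmx A = A /\ forall v : 'cV[C]_n, 0 <= (adjmx v *m A *m v) 0 0.

Definition density n (rho : 'M[C]_n) : Prop := psd rho /\ \tr rho = 1.

Definition povm n l (E : 'I_l -> 'M[C]_n) : Prop :=
  (forall j, psd (E j)) /\ \sum_(j < l) E j = 1%:M.

Definition is_linear_map m n (Phi : 'M[C]_m -> 'M[C]_n) : Prop :=
  forall (a : C) (X Y : 'M[C]_m), Phi (a *: X + Y) = a *: Phi X + Phi Y.

(* id_{M_r} (x) Phi acting on M_r (x) M_m = M_(r*m), in the Kronecker
   index convention of mxtens_index *)
Definition ampl r m n (Phi : 'M[C]_m -> 'M[C]_n) (X : 'M[C]_(r * m))
  : 'M[C]_(r * n) :=
  \matrix_(i, j)
    Phi (\matrix_(s, t) X (mxtens_index ((mxtens_unindex i).1, s))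
                           (mxtens_index ((mxtens_unindex j).1, t)))
      (mxtens_unindex i).2 (mxtens_unindex j).2.

Definition completely_positive m n (Phi : 'M[C]_m -> 'M[C]_n) : Prop :=
  forall r (X : 'M[C]_(r * m)), psd X -> psd (ampl Phi X).

Definition trace_preserving m n (Phi : 'M[C]_m -> 'M[C]_n) : Prop :=
  forall X, \tr (Phi X) = \tr X.

Definition quantum_channel m n (Phi : 'M[C]_m -> 'M[C]_n) : Prop :=
  [/\ is_linear_map Phi, completely_positive Phi & trace_preserving Phi].

(* the linear map Phi (x) Psi : M_(m*p) -> M_(n*q), determined by
   (Phi (x) Psi)(E_ab (x) E_st) = Phi(E_ab) (x) Psi(E_st) *)
Definition tensmap m n p q (Phi : 'M[C]_m -> 'M[C]_n) (Psi : 'M[C]_p -> 'M[C]_q)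
  (X : 'M[C]_(m * p)) : 'M[C]_(n * q) :=
  \sum_(a < m) \sum_(b < m) \sum_(s < p) \sum_(t < p)
     X (mxtens_index (a, s)) (mxtens_index (b, t)) *:
       (Phi (delta_mx a b) *t Psi (delta_mx s t)).

Definition image_of_states m n (Phi : 'M[C]_m -> 'M[C]_n) : 'M[C]_n -> Prop :=
  fun Z => exists rho, density rho /\ Phi rho = Z.

Definition convex_set n (T : 'M[C]_n -> Prop) : Prop :=
  forall (t : C) X Y, 0 <= t <= 1 -> T X -> T Y -> T (t *: X + (1 - t) *: Y).

Definition conv n (S : 'M[C]_n -> Prop) : 'M[C]_n -> Prop :=
  fun Z => forall T, convex_set T -> (forall Y, S Y -> T Y) -> T Z.

Definition tens_set n q (K1 : 'M[C]_n -> Prop) (K2 : 'M[C]_q -> Prop)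
  : 'M[C]_(n * q) -> Prop :=
  conv (fun Z => exists X Y, [/\ K1 X, K2 Y & Z = X *t Y]).

End QDefs.

From mathcomp Require Import all_boot all_algebra.
From mathcomp Require Import complex mxtens reals.
From mathcomp Require Import sesquilinear spectral ring.
Import GRing.Theory Num.Theory.
Import mathcomp.order.order.Order.TTheory.
Set Implicit Arguments. Unset Strict Implicit. Unset Printing Implicit Defensive.
Local Open Scope ring_scope.

(* A state rho of the composite system is sent to
     (Xi (x) Psi)(rho) = \sum_i sigma_i (x) Psi(Tr_1[rho (M_i (x) 1)]),
   and the partial states Tr_1[rho (M_i (x) 1)] are positive with traces summing
   to Tr rho = 1, so after normalisation this is a convex combination of products
   sigma_i (x) Psi(rho_i).  Each sigma_i lies in K_Xi: as ||M_i|| = 1 and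
   M_i <= 1, M_i has a unit eigenvector v with eigenvalue 1, on which every other
   M_j vanishes, so Xi(v v^* ) = sigma_i.  Conversely, for any two linear maps the
   image of the states under Phi (x) Psi is convex and contains
   Phi(rho) (x) Psi(tau) = (Phi (x) Psi)(rho (x) tau). *)

Section Adjoint.
Variable C : numClosedFieldType.

Lemma adjmxE m n (A : 'M[C]_(m, n)) i j : adjmx A i j = (A j i)^*.
Proof. by rewrite /adjmx !mxE. Qed.

Lemma adjmxK m n (A : 'M[C]_(m, n)) : adjmx (adjmx A) = A.
Proof. by apply/matrixP=> i j; rewrite !adjmxE conjCK. Qed.

Lemma adjmxM m n p (A : 'M[C]_(m, n)) (B : 'M[C]_(n, p)) :
  adjmx (A *m B) = adjmx B *m adjmx A.
Proof.
apply/matrixP=> i j; rewrite adjmxE !mxE rmorph_sum; apply: eq_bigr => k _.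
by rewrite !adjmxE rmorphM mulrC.
Qed.

Lemma adjmxD m n (A B : 'M[C]_(m, n)) : adjmx (A + B) = adjmx A + adjmx B.
Proof. by apply/matrixP=> i j; rewrite [in RHS]mxE !adjmxE mxE rmorphD. Qed.

Lemma adjmxZ m n (a : C) (A : 'M[C]_(m, n)) : adjmx (a *: A) = a^* *: adjmx A.
Proof. by apply/matrixP=> i j; rewrite [in RHS]mxE !adjmxE mxE rmorphM. Qed.

Lemma adjmx0 m n : adjmx (0 : 'M[C]_(m, n)) = 0.
Proof. by apply/matrixP=> i j; rewrite adjmxE !mxE rmorph0. Qed.

Lemma adjmx_delta m n (i : 'I_m) (j : 'I_n) :
  adjmx (delta_mx i j : 'M[C]_(m, n)) = delta_mx j i.
Proof.
apply/matrixP=> a b; rewrite adjmxE !mxE.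
by case: (a == j); case: (b == i); rewrite /= ?rmorph0 ?rmorph1.
Qed.

Lemma adjmx_trmxC m n (A : 'M[C]_(m, n)) : adjmx A = (A ^t* )%sesqui.
Proof. by apply/matrixP=> i j; rewrite adjmxE !mxE. Qed.

Definition dyad n (w : 'cV[C]_n) : 'M[C]_n := w *m adjmx w.

Lemma dyadE n (w : 'cV[C]_n) i j : dyad w i j = w i 0 * (w j 0)^*.
Proof. by rewrite /dyad !mxE big_ord1 adjmxE. Qed.

Lemma qformD n (v : 'cV[C]_n) A B :
  (adjmx v *m (A + B) *m v) 0 0 = (adjmx v *m A *m v) 0 0 + (adjmx v *m B *m v) 0 0.
Proof. by rewrite mulmxDr mulmxDl mxE. Qed.

Lemma qformZ n (v : 'cV[C]_n) a A :
  (adjmx v *m (a *: A) *m v) 0 0 = a * (adjmx v *m A *m v) 0 0.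
Proof. by rewrite -scalemxAr -scalemxAl mxE. Qed.

Lemma qform_sum n l (v : 'cV[C]_n) (F : 'I_l -> 'M[C]_n) :
  (adjmx v *m (\sum_(j < l) F j) *m v) 0 0 = \sum_j (adjmx v *m F j *m v) 0 0.
Proof. by rewrite mulmx_sumr mulmx_suml summxE. Qed.

Lemma dotmx_self_ge0 n (w : 'cV[C]_n) : 0 <= (adjmx w *m w) 0 0.
Proof. by rewrite mxE sumr_ge0 // => j _; rewrite adjmxE mulrC mul_conjC_ge0. Qed.

Lemma dotmx_self_eq0 n (w : 'cV[C]_n) : (adjmx w *m w) 0 0 = 0 -> w = 0.
Proof.
have ge0 i : 0 <= adjmx w 0 i * w i 0 by rewrite adjmxE mulrC mul_conjC_ge0.
rewrite mxE => /psumr_eq0P w0; apply/matrixP=> j z; rewrite ord1 mxE.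
have /eqP := w0 (fun i _ => ge0 i) j isT.
by rewrite adjmxE -normCKC expf_eq0 /= normr_eq0 => /eqP.
Qed.

Lemma vnorm_sq n (v : 'cV[C]_n) : vnorm v ^+ 2 = (adjmx v *m v) 0 0.
Proof. by rewrite /vnorm sqrtCK mxE; apply: eq_bigr => j _; rewrite adjmxE normCKC. Qed.

Lemma vnorm_ge0 n (v : 'cV[C]_n) : 0 <= vnorm v.
Proof. by rewrite /vnorm sqrtC_ge0 sumr_ge0 // => j _; rewrite exprn_ge0. Qed.

Lemma unitary_row_unit n (P : 'M[C]_n) k :
  P *m adjmx P = 1%:M -> adjmx (adjmx (row k P)) *m adjmx (row k P) = 1%:M.
Proof.
move=> PP; rewrite adjmxK rowE adjmxM mulmxA -(mulmxA _ P) PP mulmx1 adjmx_delta.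
by apply/matrixP=> a b; rewrite !ord1 -rowE !mxE eqxx.
Qed.

Lemma spectral_qform_row n (A P : 'M[C]_n) (d : 'rV[C]_n) k :
  P *m adjmx P = 1%:M -> A = adjmx P *m diag_mx d *m P ->
  adjmx (adjmx (row k P)) *m A *m adjmx (row k P) = (d 0 k)%:M.
Proof.
move=> PP ->; rewrite adjmxK rowE adjmxM !mulmxA.
rewrite -(mulmxA _ P (adjmx P)) PP mulmx1 -(mulmxA _ P (adjmx P)) PP mulmx1.
apply/matrixP=> a b; rewrite !ord1.
by rewrite adjmx_delta -rowE -colE !mxE eqxx !mulr1n.
Qed.

End Adjoint.

Section PositiveSemidefinite.
Variable C : numClosedFieldType.

Lemma psd0 n : psd (0 : 'M[C]_n).
Proof. by split; [rewrite adjmx0 | move=> v; rewrite mulmx0 mul0mx mxE]. Qed.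

Lemma psdD n (A B : 'M[C]_n) : psd A -> psd B -> psd (A + B).
Proof.
move=> [hA pA] [hB pB]; split; first by rewrite adjmxD hA hB.
by move=> v; rewrite qformD addr_ge0.
Qed.

Lemma psdZ n (a : C) (A : 'M[C]_n) : 0 <= a -> psd A -> psd (a *: A).
Proof.
move=> a0 [hA pA]; split; first by rewrite adjmxZ hA geC0_conj.
by move=> v; rewrite qformZ mulr_ge0.
Qed.

Lemma psd_sum n (I : Type) (r : seq I) (P : pred I) (F : I -> 'M[C]_n) :
  (forall i, P i -> psd (F i)) -> psd (\sum_(i <- r | P i) F i).
Proof. by move=> H; apply: (big_ind (@psd C n)) => //; [apply: psd0 | apply: psdD]. Qed.

Lemma psd_dyad n (w : 'cV[C]_n) : psd (dyad w).
Proof.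
split; first by rewrite /dyad adjmxM adjmxK.
move=> v; rewrite /dyad !mulmxA -mulmxA -[adjmx w *m v]adjmxK adjmxM adjmxK.
by rewrite mxE big_ord1 adjmxE mul_conjC_ge0.
Qed.

Lemma psd_spectral n (A : 'M[C]_n) : psd A ->
  exists (P : 'M[C]_n) (d : 'rV[C]_n),
  [/\ P *m adjmx P = 1%:M, adjmx P *m P = 1%:M, A = adjmx P *m diag_mx d *m P
    & forall k, 0 <= d 0 k].
Proof.
move=> [hA pA].
have /hermitian_normalmx /orthomx_spectralP Aeq : A \is hermsymmx.
  by rewrite is_hermitianmxE expr0 scale1r -adjmx_trmxC hA.
set P := spectralmx A in Aeq; set d := spectral_diag A in Aeq.
have PP : P *m adjmx P = 1%:M.
  by rewrite adjmx_trmxC; apply/unitarymxP/spectral_unitarymx.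
have PP' : adjmx P *m P = 1%:M by apply: mulmx1C.
have {}Aeq : A = adjmx P *m diag_mx d *m P.
  by rewrite {1}Aeq invmx_unitary ?spectral_unitarymx // adjmx_trmxC.
exists P, d; split => // k.
by have := pA (adjmx (row k P)); rewrite (spectral_qform_row k PP Aeq) mxE eqxx.
Qed.

Lemma psd_sum_dyad n (A : 'M[C]_n) : psd A ->
  exists w : 'I_n -> 'cV[C]_n, A = \sum_k dyad (w k).
Proof.
move=> /psd_spectral [P [d [_ _ -> d0]]].
exists (fun k => sqrtC (d 0 k) *: adjmx (row k P)).
apply/matrixP=> i j; rewrite summxE !mxE; apply: eq_bigr => k _.
rewrite dyadE !mxE (bigD1 k) //= big1; last first.
  by move=> l /negbTE lk; rewrite !mxE lk mulr0n mulr0.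
have sqrt_conj : (sqrtC (d 0 k))^* = sqrtC (d 0 k) by rewrite geC0_conj ?sqrtC_ge0.
rewrite addr0 !mxE eqxx mulr1n rmorphM /= conjCK sqrt_conj.
by rewrite -[d 0 k in LHS]sqrtCK; ring.
Qed.

Lemma mxtrace_dyad n (w : 'cV[C]_n) : \tr (dyad w) = (adjmx w *m w) 0 0.
Proof. by rewrite /dyad mxtrace_mulC /mxtrace big_ord1. Qed.

Lemma psd_mxtrace_ge0 n (A : 'M[C]_n) : psd A -> 0 <= \tr A.
Proof.
move=> /psd_sum_dyad [w ->]; rewrite raddf_sum /= sumr_ge0 // => k _.
by rewrite mxtrace_dyad dotmx_self_ge0.
Qed.

Lemma psd_mxtrace_eq0 n (A : 'M[C]_n) : psd A -> \tr A = 0 -> A = 0.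
Proof.
move=> /psd_sum_dyad [w ->]; rewrite raddf_sum /= => /psumr_eq0P tr0.
rewrite big1 // => k _; suff -> : w k = 0 by rewrite /dyad mul0mx.
apply: dotmx_self_eq0; rewrite -mxtrace_dyad tr0 // => i _.
by rewrite mxtrace_dyad dotmx_self_ge0.
Qed.

Lemma density_convex n : convex_set (@density C n).
Proof.
move=> t A B /andP[t0 t1] [pA tA] [pB tB]; split.
  by apply: psdD; apply: psdZ => //; rewrite subr_ge0.
by rewrite mxtraceD !mxtraceZ tA tB !mulr1 addrC subrK.
Qed.

End PositiveSemidefinite.

Section LinearMap.
Variables (C : numClosedFieldType) (m n : nat) (Phi : 'M[C]_m -> 'M[C]_n).
Hypothesis Phi_lin : is_linear_map Phi.

Lemma linear_map0 : Phi 0 = 0.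
Proof.
have := Phi_lin 1 0 0; rewrite !scale1r addr0 => Phi00.
by apply: (addrI (Phi 0)); rewrite addr0 -Phi00.
Qed.

Lemma linear_mapD X Y : Phi (X + Y) = Phi X + Phi Y.
Proof. by have := Phi_lin 1 X Y; rewrite !scale1r. Qed.

Lemma linear_mapZ a X : Phi (a *: X) = a *: Phi X.
Proof. by have := Phi_lin a X 0; rewrite !addr0 linear_map0 addr0. Qed.

Lemma linear_map_sum (I : Type) (r : seq I) (P : pred I) F :
  Phi (\sum_(i <- r | P i) F i) = \sum_(i <- r | P i) Phi (F i).
Proof. exact: (big_morph Phi linear_mapD linear_map0). Qed.

Lemma linear_map_delta X :
  Phi X = \sum_(a < m) \sum_(b < m) X a b *: Phi (delta_mx a b).
Proof.
rewrite {1}(matrix_sum_delta X) linear_map_sum; apply: eq_bigr => a _.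
by rewrite linear_map_sum; apply: eq_bigr => b _; rewrite linear_mapZ.
Qed.

Lemma image_of_states_convex : convex_set (image_of_states Phi).
Proof.
move=> t _ _ t01 [rho1 [d1 <-]] [rho2 [d2 <-]].
exists (t *: rho1 + (1 - t) *: rho2); split; first exact: density_convex.
by rewrite Phi_lin linear_mapZ.
Qed.

End LinearMap.

Section KroneckerProduct.
Variable C : numClosedFieldType.

Lemma tensmxDl m n p q (A B : 'M[C]_(m, n)) (D : 'M[C]_(p, q)) :
  (A + B) *t D = A *t D + B *t D.
Proof. by apply/matrixP=> i j; rewrite !mxE mulrDl. Qed.

Lemma tensmxDr m n p q (A : 'M[C]_(m, n)) (B D : 'M[C]_(p, q)) :
  A *t (B + D) = A *t B + A *t D.
Proof. by apply/matrixP=> i j; rewrite !mxE mulrDr. Qed.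

Lemma tensmxZl m n p q a (A : 'M[C]_(m, n)) (D : 'M[C]_(p, q)) :
  (a *: A) *t D = a *: (A *t D).
Proof. by apply/matrixP=> i j; rewrite !mxE mulrA. Qed.

Lemma tensmxZr m n p q a (A : 'M[C]_(m, n)) (D : 'M[C]_(p, q)) :
  A *t (a *: D) = a *: (A *t D).
Proof. by apply/matrixP=> i j; rewrite !mxE mulrCA. Qed.

Lemma tensmx_suml m n p q (I : Type) (r : seq I) (P : pred I)
    (F : I -> 'M[C]_(m, n)) (D : 'M[C]_(p, q)) :
  (\sum_(i <- r | P i) F i) *t D = \sum_(i <- r | P i) (F i *t D).
Proof.
by apply: (big_morph (fun A => A *t D)) => [A B|]; [apply: tensmxDl | apply: tens0mx].
Qed.

Lemma tensmx_sumr m n p q (I : Type) (r : seq I) (P : pred I)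
    (A : 'M[C]_(m, n)) (F : I -> 'M[C]_(p, q)) :
  A *t (\sum_(i <- r | P i) F i) = \sum_(i <- r | P i) (A *t F i).
Proof.
by apply: (big_morph (fun B => A *t B)) => [B D|]; [apply: tensmxDr | apply: tensmx0].
Qed.

Lemma big_mxtens m n (F : 'I_(m * n) -> C) :
  \sum_k F k = \sum_a \sum_s F (mxtens_index (a, s)).
Proof.
rewrite pair_big /= (reindex (@mxtens_index m n)) /=; first by apply: eq_bigr => -[].
by exists (@mxtens_unindex m n) => k _; rewrite (mxtens_indexK, mxtens_unindexK).
Qed.

Lemma mxtrace_tens m n (A : 'M[C]_m) (B : 'M[C]_n) : \tr (A *t B) = \tr A * \tr B.
Proof. by rewrite /mxtrace mulr_sum; apply: eq_bigr => k _; rewrite mxE. Qed.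

Lemma psd_tens m n (A : 'M[C]_m) (B : 'M[C]_n) : psd A -> psd B -> psd (A *t B).
Proof.
move=> /psd_sum_dyad [w ->] /psd_sum_dyad [x ->].
rewrite tensmx_suml; apply: psd_sum => k _; rewrite tensmx_sumr; apply: psd_sum => k' _.
suff -> : dyad (w k) *t dyad (x k') =
    dyad (\col_i (w k (mxtens_unindex i).1 0 * x k' (mxtens_unindex i).2 0)).
  exact: psd_dyad.
by apply/matrixP=> i j; rewrite [LHS]mxE !dyadE !mxE rmorphM; ring.
Qed.

Lemma density_tens m n (A : 'M[C]_m) (B : 'M[C]_n) :
  density A -> density B -> density (A *t B).
Proof.
move=> [pA tA] [pB tB]; split; first exact: psd_tens.
by rewrite mxtrace_tens tA tB mulr1.
Qed.

Lemma tensmap_linear m n p q (Phi : 'M[C]_m -> 'M[C]_n) (Psi : 'M[C]_p -> 'M[C]_q) :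
  is_linear_map (tensmap Phi Psi).
Proof.
move=> a X Y; rewrite /tensmap scaler_sumr -big_split; apply: eq_bigr => i _ /=.
rewrite scaler_sumr -big_split; apply: eq_bigr => j _ /=.
rewrite scaler_sumr -big_split; apply: eq_bigr => s _ /=.
rewrite scaler_sumr -big_split; apply: eq_bigr => t _ /=.
by rewrite !mxE scalerDl scalerA.
Qed.

Lemma tensmap_tens m n p q (Phi : 'M[C]_m -> 'M[C]_n) (Psi : 'M[C]_p -> 'M[C]_q) A B :
  is_linear_map Phi -> is_linear_map Psi ->
  tensmap Phi Psi (A *t B) = Phi A *t Psi B.
Proof.
move=> Phi_lin Psi_lin.
rewrite (linear_map_delta Phi_lin A) (linear_map_delta Psi_lin B) /tensmap tensmx_suml.
apply: eq_bigr => a _; rewrite tensmx_suml; apply: eq_bigr => b _.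
rewrite tensmxZl tensmx_sumr scaler_sumr; apply: eq_bigr => s _.
rewrite tensmx_sumr scaler_sumr; apply: eq_bigr => t _.
by rewrite tensmxE tensmxZr scalerA.
Qed.

End KroneckerProduct.

Lemma seq_bound_lt1 (R : numDomainType) (s : seq R) :
  all (fun x => 0 <= x < 1) s -> exists b, [/\ 0 <= b, b < 1 & all (fun x => x <= b) s].
Proof.
elim: s => [|x s IH] /=; first by exists 0; rewrite lexx ltr01.
move=> /andP[/andP[x0 x1] /IH [b [b0 b1 bs]]].
have [xb|bx] := boolP (x <= b); first by exists b; rewrite xb.
have {}bx : b <= x by rewrite ltW // real_ltNge ?ger0_real.
exists x; rewrite x0 x1 lexx; split => //=.
by apply/allP => y /(allP bs) yb; apply: le_trans bx.
Qed.

Section OperatorNorm.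
Variables (C : numClosedFieldType) (n : nat).
Implicit Types (A P : 'M[C]_n) (d : 'rV[C]_n).

Lemma vnorm_spectral_le A P d (b : C) :
  adjmx A = A -> P *m adjmx P = 1%:M -> A = adjmx P *m diag_mx d *m P ->
  0 <= b -> (forall k, 0 <= d 0 k <= b) ->
  forall v, vnorm v = 1 -> vnorm (A *m v) <= b.
Proof.
move=> Aherm PP Aeq b0 db v vn.
rewrite -(ler_pXn2r (n := 2)) ?qualifE /= ?vnorm_ge0 // vnorm_sq adjmxM Aherm.
set y := P *m v.
have -> : adjmx v *m A *m (A *m v) = adjmx y *m diag_mx (\row_j (d 0 j * d 0 j)) *m y.
  by rewrite /y Aeq adjmxM -mulmx_diag !mulmxA -(mulmxA _ P (adjmx P)) PP mulmx1.
have yn : (adjmx y *m y) 0 0 = 1.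
  rewrite /y adjmxM mulmxA -(mulmxA _ (adjmx P)) mulmx1C // mulmx1.
  by rewrite -vnorm_sq vn expr1n.
clearbody y; rewrite -[_ ^+ 2]mulr1 -yn !mxE mulr_sumr; apply: ler_sum => j _.
rewrite !mxE (bigD1 j) //= big1 => [|a /negbTE aj]; last by rewrite !mxE aj mulr0n mulr0.
have /andP[dj0 djb] := db j.
rewrite addr0 !mxE eqxx mulr1n mulrAC [b ^+ 2 * _]mulrC ler_wpM2l ?expr2 ?ler_pM //.
by rewrite mulrC mul_conjC_ge0.
Qed.

Lemma psd_opnorm1_eigvec A : psd A -> is_opnorm A 1 ->
  exists v : 'cV[C]_n, adjmx v *m v = 1%:M /\ 1 <= (adjmx v *m A *m v) 0 0.
Proof.
move=> Apsd [_ Amin]; have [P [d [PP _ Aeq d0]]] := psd_spectral Apsd.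
suff /existsP [k dk] : [exists k, 1 <= d 0 k].
  exists (adjmx (row k P)); rewrite unitary_row_unit //.
  by rewrite (spectral_qform_row _ PP Aeq) mxE eqxx.
(* otherwise the largest eigenvalue would be an operator-norm bound below 1 *)
apply: contraT; rewrite negb_exists => /forallP dlt1.
have : all (fun x => 0 <= x < 1) [seq d 0 k | k <- enum 'I_n].
  apply/allP => _ /mapP [k _ ->].
  by rewrite d0 real_ltNge ?ger0_real ?ler01 ?dlt1.
move=> /seq_bound_lt1 [b [b0 b1 /allP db]].
suff : 1 <= b by rewrite real_leNgt ?b1 ?ger0_real ?ler01.
apply: Amin; apply: (vnorm_spectral_le _ PP Aeq b0); first by case: Apsd.
by move=> k; rewrite d0 db //; apply: map_f; rewrite mem_enum.
Qed.

End OperatorNorm.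

Section PartialTrace.
Variables (C : numClosedFieldType) (p N : nat).

(* [ptrl A rho] is Tr_1[rho (A (x) 1)]: for a POVM element A it is the
   unnormalised state left on the second factor after outcome A on the first. *)
Definition ptrl (A : 'M[C]_p) (rho : 'M[C]_(p * N)) : 'M[C]_N :=
  \matrix_(s, t) \sum_a \sum_b rho (mxtens_index (a, s)) (mxtens_index (b, t)) * A b a.

Lemma ptrlDl A B rho : ptrl (A + B) rho = ptrl A rho + ptrl B rho.
Proof.
apply/matrixP=> s t; rewrite !mxE -big_split; apply: eq_bigr => a _ /=.
by rewrite -big_split; apply: eq_bigr => b _ /=; rewrite !mxE mulrDr.
Qed.

Lemma ptrl0l rho : ptrl 0 rho = 0.
Proof.
apply/matrixP=> s t; rewrite !mxE big1 // => a _; rewrite big1 // => b _.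
by rewrite mxE mulr0.
Qed.

Lemma ptrlDr A rho1 rho2 : ptrl A (rho1 + rho2) = ptrl A rho1 + ptrl A rho2.
Proof.
apply/matrixP=> s t; rewrite !mxE -big_split; apply: eq_bigr => a _ /=.
by rewrite -big_split; apply: eq_bigr => b _ /=; rewrite !mxE mulrDl.
Qed.

Lemma ptrl0r A : ptrl A 0 = 0.
Proof.
apply/matrixP=> s t; rewrite !mxE big1 // => a _; rewrite big1 // => b _.
by rewrite mxE mul0r.
Qed.

Lemma ptrl_suml (I : Type) (r : seq I) (P : pred I) (F : I -> 'M[C]_p) rho :
  ptrl (\sum_(i <- r | P i) F i) rho = \sum_(i <- r | P i) ptrl (F i) rho.
Proof. by apply: (big_morph (ptrl^~ rho)) => [A B|]; [apply: ptrlDl | apply: ptrl0l]. Qed.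

Lemma ptrl_sumr (I : Type) (r : seq I) (P : pred I) A (F : I -> 'M[C]_(p * N)) :
  ptrl A (\sum_(i <- r | P i) F i) = \sum_(i <- r | P i) ptrl A (F i).
Proof. by apply: (big_morph (ptrl A)) => [X Y|]; [apply: ptrlDr | apply: ptrl0r]. Qed.

Lemma ptrl_dyad (u : 'cV[C]_p) (w : 'cV[C]_(p * N)) :
  ptrl (dyad u) (dyad w) = dyad (\col_s \sum_a (u a 0)^* * w (mxtens_index (a, s)) 0).
Proof.
apply/matrixP=> s t; rewrite dyadE !mxE rmorph_sum mulr_suml; apply: eq_bigr => a _.
rewrite mulr_sumr; apply: eq_bigr => b _.
by rewrite !dyadE rmorphM /= conjCK; ring.
Qed.

Lemma psd_ptrl A rho : psd A -> psd rho -> psd (ptrl A rho).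
Proof.
move=> /psd_sum_dyad [u ->] /psd_sum_dyad [w ->].
rewrite ptrl_suml; apply: psd_sum => k _; rewrite ptrl_sumr; apply: psd_sum => k' _.
by rewrite ptrl_dyad; apply: psd_dyad.
Qed.

Lemma mxtrace_ptrl1 rho : \tr (ptrl 1%:M rho) = \tr rho.
Proof.
rewrite [RHS]/mxtrace big_mxtens exchange_big /mxtrace; apply: eq_bigr => s _.
rewrite mxE; apply: eq_bigr => a _.
rewrite (bigD1 a) //= big1 => [|b ba]; rewrite !mxE; first by rewrite eqxx mulr1 addr0.
by rewrite (negbTE ba) mulr0.
Qed.

End PartialTrace.

Section EntanglementBreaking.
Variables (C : numClosedFieldType) (p q l : nat).
Variables (M : 'I_l -> 'M[C]_p) (sigma : 'I_l -> 'M[C]_q).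

Definition eb_channel (X : 'M[C]_p) : 'M[C]_q := \sum_(j < l) \tr (X *m M j) *: sigma j.

Lemma eb_channel_linear : is_linear_map eb_channel.
Proof.
move=> a X Y; rewrite /eb_channel scaler_sumr -big_split; apply: eq_bigr => j _ /=.
by rewrite mulmxDl mxtraceD -scalemxAl mxtraceZ scalerDl scalerA.
Qed.

Lemma eb_channel_dyad v :
  eb_channel (dyad v) = \sum_j (adjmx v *m M j *m v) 0 0 *: sigma j.
Proof.
apply: eq_bigr => j _; congr (_ *: _).
by rewrite /dyad -mulmxA mxtrace_mulC /mxtrace big_ord1.
Qed.

Lemma povm_opnorm1_eigvec i : povm M -> is_opnorm (M i) 1 ->
  exists v : 'cV[C]_p, adjmx v *m v = 1%:M /\
    forall j, (adjmx v *m M j *m v) 0 0 = (i == j)%:R.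
Proof.
move=> [Mpsd Msum] Mi1; have [v [vn qi]] := psd_opnorm1_eigvec (Mpsd i) Mi1.
exists v; split => // j.
pose f x := (adjmx v *m M x *m v) 0 0.
have f_ge0 x : 0 <= f x by have [_] := Mpsd x; apply.
have f_sum : \sum_j f j = 1 by rewrite /f -qform_sum Msum mulmx1 vn mxE.
have f_rest : \sum_(j | j != i) f j = 1 - f i.
  by rewrite -f_sum [in RHS](bigD1 i) //= addrC addrK.
have fi1 : f i = 1 by apply/le_anti; rewrite qi andbT -subr_ge0 -f_rest sumr_ge0.
have [<-|ij] := eqVneq i j; first by rewrite -/(f i) fi1.
rewrite -/(f j); apply: (psumr_eq0P (P := fun j => j != i)) => //.
  by rewrite f_rest fi1 subrr.
by rewrite eq_sym.
Qed.

Lemma eb_channel_image i : povm M -> is_opnorm (M i) 1 ->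
  image_of_states eb_channel (sigma i).
Proof.
move=> Mpovm Mi1; have [v [vn qv]] := povm_opnorm1_eigvec Mpovm Mi1.
exists (dyad v); split; first by split; [apply: psd_dyad | rewrite mxtrace_dyad vn mxE].
rewrite eb_channel_dyad (bigD1 i) //= big1 => [|j ji]; rewrite qv.
  by rewrite eqxx scale1r addr0.
by rewrite eq_sym (negbTE ji) scale0r.
Qed.

Lemma povm_mxtrace_ptrl N (rho : 'M[C]_(p * N)) :
  povm M -> \sum_i \tr (ptrl (M i) rho) = \tr rho.
Proof. by move=> [_ Msum]; rewrite -raddf_sum -ptrl_suml Msum /= mxtrace_ptrl1. Qed.

Lemma mxtrace_delta_mul (a b : 'I_p) (A : 'M[C]_p) : \tr (delta_mx a b *m A) = A b a.
Proof.
rewrite /mxtrace (bigD1 a) //= big1 => [|k ka]; rewrite mxE.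
  rewrite (bigD1 b) //= big1 => [|j jb]; rewrite !mxE ?eqxx ?mulr1n ?mul1r ?addr0 //.
  by rewrite (negbTE jb) andbF mulr0n mul0r.
by rewrite big1 // => j _; rewrite mxE (negbTE ka) mulr0n mul0r.
Qed.

Lemma tensmap_eb_channel N k (Psi : 'M[C]_N -> 'M[C]_k) rho :
  is_linear_map Psi ->
  tensmap eb_channel Psi rho = \sum_i sigma i *t Psi (ptrl (M i) rho).
Proof.
(* both sides expand to the same five-fold sum, only in another order *)
move=> Psi_lin.
pose F i s t a b := (rho (mxtens_index (a, s)) (mxtens_index (b, t)) * M i b a) *:
  (sigma i *t Psi (delta_mx s t)).
have -> : \sum_i sigma i *t Psi (ptrl (M i) rho) =
    \sum_i \sum_s \sum_t \sum_a \sum_b F i s t a b.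
  apply: eq_bigr => i _; rewrite (linear_map_delta Psi_lin) tensmx_sumr.
  apply: eq_bigr => s _; rewrite tensmx_sumr.
  apply: eq_bigr => t _; rewrite tensmxZr mxE scaler_suml.
  by apply: eq_bigr => a _; rewrite scaler_suml.
have -> : tensmap eb_channel Psi rho = \sum_a \sum_b \sum_s \sum_t \sum_i F i s t a b.
  do 4!(apply: eq_bigr => ? _); rewrite /eb_channel tensmx_suml scaler_sumr.
  by apply: eq_bigr => i _; rewrite mxtrace_delta_mul tensmxZl scalerA.
under eq_bigr => a _ do under eq_bigr => b _ do under eq_bigr => s _ do
  rewrite exchange_big.
under eq_bigr => a _ do under eq_bigr => b _ do rewrite exchange_big.
under eq_bigr => a _ do rewrite exchange_big.
rewrite exchange_big; apply: eq_bigr => i _.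
under eq_bigr => a _ do under eq_bigr => s _ do rewrite exchange_big.
under eq_bigr => a _ do rewrite exchange_big.
under eq_bigr => a _ do under eq_bigr => t _ do rewrite exchange_big.
under eq_bigr => a _ do rewrite exchange_big.
by rewrite exchange_big; apply: eq_bigr => s _; rewrite exchange_big.
Qed.

End EntanglementBreaking.

Section ConvexHull.
Variables (C : numClosedFieldType) (n : nat) (S : 'M[C]_n -> Prop).

Lemma conv_convex : convex_set (conv S).
Proof.
move=> t X Y t01 SX SY T T_cvx ST.
exact: T_cvx t X Y t01 (SX T T_cvx ST) (SY T T_cvx ST).
Qed.

Lemma conv_sub X : S X -> conv S X.
Proof. by move=> SX T _; apply. Qed.

Lemma conv_comb l (c : 'I_l -> C) (Y : 'I_l -> 'M[C]_n) :
  (forall i, 0 <= c i) -> \sum_i c i = 1 ->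
  (forall i, c i != 0 -> exists2 X, S X & Y i = c i *: X) ->
  (forall i, c i = 0 -> Y i = 0) -> conv S (\sum_i Y i).
Proof.
move=> c_ge0 c_sum SY Y0.
have Y_sum0 (r : seq 'I_l) : \sum_(i <- r) c i = 0 -> \sum_(i <- r) Y i = 0.
  move=> /eqP; rewrite psumr_eq0 // => /allP c0.
  by rewrite big_seq big1 // => i /c0 /eqP /Y0.
suff /(_ (index_enum _)) : forall r : seq 'I_l, \sum_(i <- r) c i != 0 ->
    conv S ((\sum_(i <- r) c i)^-1 *: \sum_(i <- r) Y i).
  by rewrite c_sum invr1 scale1r; apply; rewrite oner_eq0.
elim=> [|j r IH]; first by rewrite big_nil eqxx.
rewrite !big_cons; set s := c j + _ => s_neq0.
have [r0|r_neq0] := eqVneq (\sum_(i <- r) c i) 0.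
  rewrite /s r0 addr0 in s_neq0 *; rewrite Y_sum0 // addr0.
  by have [X SX ->] := SY j s_neq0; rewrite scalerA mulVf // scale1r; apply: conv_sub.
have [cj0|cj_neq0] := eqVneq (c j) 0.
  by rewrite /s cj0 add0r Y0 // add0r; apply: IH.
have [X SX ->] := SY j cj_neq0.
have s_gt0 : 0 < s by rewrite lt_def s_neq0 addr_ge0 ?sumr_ge0.
(* the new point is a convex combination of [X] and the previous barycentre *)
have -> : s^-1 *: (c j *: X + \sum_(i <- r) Y i) =
    (c j / s) *: X + (1 - c j / s) *: ((\sum_(i <- r) c i)^-1 *: \sum_(i <- r) Y i).
  rewrite scalerDr !scalerA mulrC; congr (_ + _).
  have -> : 1 - c j / s = (\sum_(i <- r) c i) / s.
    by rewrite -[1](divff s_neq0) /s -mulrBl addrC addKr.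
  by rewrite mulrAC mulfV // mul1r.
apply: conv_convex; [|exact: conv_sub|exact: IH].
by rewrite divr_ge0 ?(ltW s_gt0) //= ler_pdivrMr // mul1r /s lerDl sumr_ge0.
Qed.

End ConvexHull.

Lemma tens_set_sub_image_tensmap (C : numClosedFieldType) m n p q
    (Phi : 'M[C]_m -> 'M[C]_n) (Psi : 'M[C]_p -> 'M[C]_q) Z :
  is_linear_map Phi -> is_linear_map Psi ->
  tens_set (image_of_states Phi) (image_of_states Psi) Z ->
  image_of_states (tensmap Phi Psi) Z.
Proof.
move=> Phi_lin Psi_lin; apply; first exact/image_of_states_convex/tensmap_linear.
move=> _ [_ [_ [[rho [rho_st <-]] [tau [tau_st <-]] ->]]].
by exists (rho *t tau); split; [exact: density_tens | exact: tensmap_tens].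
Qed.

Lemma image_tensmap_eb_sub_tens_set (C : numClosedFieldType) p q l N k
    (M : 'I_l -> 'M[C]_p) (sigma : 'I_l -> 'M[C]_q) (Psi : 'M[C]_N -> 'M[C]_k) Z :
  povm M -> (forall i, is_opnorm (M i) 1) -> is_linear_map Psi ->
  image_of_states (tensmap (eb_channel M sigma) Psi) Z ->
  tens_set (image_of_states (eb_channel M sigma)) (image_of_states Psi) Z.
Proof.
move=> Mpovm Mnorm Psi_lin [rho [[rho_psd rho_tr] <-]].
have ptrl_psd i : psd (ptrl (M i) rho) by apply: psd_ptrl => //; case: Mpovm.
pose c i := \tr (ptrl (M i) rho).
rewrite tensmap_eb_channel //; apply: (@conv_comb _ _ _ _ c).
- by move=> i; apply: psd_mxtrace_ge0.
- by rewrite povm_mxtrace_ptrl.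
- move=> i ci_neq0; exists (sigma i *t Psi ((c i)^-1 *: ptrl (M i) rho)); last first.
    by rewrite (linear_mapZ Psi_lin) tensmxZr scalerA mulfV // scale1r.
  exists (sigma i), (Psi ((c i)^-1 *: ptrl (M i) rho)); split => //.
    exact: eb_channel_image.
  exists ((c i)^-1 *: ptrl (M i) rho); split => //; split; last by rewrite mxtraceZ mulVf.
  by apply: psdZ; rewrite ?invr_ge0 ?psd_mxtrace_ge0.
- move=> i ci0.
  by rewrite (psd_mxtrace_eq0 (ptrl_psd i) ci0) (linear_map0 Psi_lin) tensmx0.
Qed.

Theorem theorem8p7 (R : realType) (p q l N k : nat)
  (M : 'I_l -> 'M[R[i]]_p) (sigma : 'I_l -> 'M[R[i]]_q)
  (Psi : 'M[R[i]]_N -> 'M[R[i]]_k) :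
  povm M ->
  (forall j, is_opnorm (M j) 1) ->
  (forall j, density (sigma j)) ->
  quantum_channel Psi ->
  let Xi := fun X : 'M[R[i]]_p => \sum_(j < l) \tr (X *m M j) *: sigma j in
  forall Z : 'M[R[i]]_(q * k),
    image_of_states (tensmap Xi Psi) Z <->
    tens_set (image_of_states Xi) (image_of_states Psi) Z.
Proof.
move=> Mpovm Mnorm _ [Psi_lin _ _] Xi Z; split.
  exact: image_tensmap_eb_sub_tens_set.
by apply: tens_set_sub_image_tensmap => //; apply: eb_channel_linear.
Qed.
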